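(* Let $X$ be a real normed linear space and $x\in X\setminus\{\theta\}$. Let $y_1,y_2\in X\setminus\{\theta\}$ satisfy $x\perp_B y_1$ and $x\perp_B y_2$. If $x$ is $\varepsilon$-smooth, where $0\le\varepsilon<\frac{2\|y_1+y_2\|}{\|y_1\|+\|y_2\|}\le2$, then there exists $\varepsilon_1\in[0,1)$ such that $x\perp_B^{\varepsilon_1}(y_1+y_2)$.
   Context: $x\perp_B y$ (Birkhoff–James orthogonality) means $\|x+\lambda y\|\ge\|x\|$ for all $\lambda\in\mathbb{R}$. For $\delta\in[0,1)$, $x\perp_B^\delta y$ means $\|x+\lambda y\|^2\ge\|x\|^2-2\delta\|x\|\|\lambda y\|$ for all $\lambda\in\mathbb{R}$. For $x\neq\theta$, $J(x)=\{f\in S_{X^*}:f(x)=\|x\|\}$, and $x$ is $\varepsilon$-smooth if $\sup_{f,g\in J(x)}\|f-g\|\le\varepsilon$. *)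

From HB Require Import structures.
From mathcomp Require Import all_boot all_order all_algebra.
From mathcomp Require Import all_classical all_reals all_analysis.
Set Implicit Arguments. Unset Strict Implicit. Unset Printing Implicit Defensive.
Import Order.TTheory GRing.Theory Num.Theory.
Import numFieldNormedType.Exports.
Local Open Scope classical_set_scope.
Local Open Scope ring_scope.

Section Defs.
Variables (R : realType) (X : normedModType R).

Definition BJ_orth (x y : X) : Prop :=
  forall l : R, `|x| <= `|x + l *: y|.

Definition BJ_orth_approx (delta : R) (x y : X) : Prop :=
  forall l : R, `|x| ^+ 2 - 2 * delta * `|x| * `|l *: y| <= `|x + l *: y| ^+ 2.

Definition is_linear_functional (f : X -> R) : Prop :=
  forall (a : R) (u v : X), f (a *: u + v) = a * f u + f v.

Definition is_bounded_functional (f : X -> R) : Prop :=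
  exists M : R, forall z : X, `|f z| <= M * `|z|.

Definition in_dual (f : X -> R) : Prop :=
  is_linear_functional f /\ is_bounded_functional f.

Definition dual_norm (f : X -> R) : R :=
  sup [set `|f z| | z in [set z : X | `|z| <= 1]].

Definition in_dual_sphere (f : X -> R) : Prop :=
  in_dual f /\ dual_norm f = 1.

Definition Jset (x : X) : set (X -> R) :=
  [set f | in_dual_sphere f /\ f x = `|x|].

Definition eps_smooth (eps : R) (x : X) : Prop :=
  forall f g : X -> R, f \in Jset x -> g \in Jset x ->
    dual_norm (fun z => f z - g z) <= eps.

End Defs.

From HB Require Import structures.
From mathcomp Require Import all_boot all_order all_algebra.
From mathcomp Require Import all_classical all_reals all_analysis.
From mathcomp Require Import ring lra.
Import Order.TTheory GRing.Theory Num.Theory.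
Import numFieldNormedType.Exports.
Local Open Scope classical_set_scope.
Local Open Scope ring_scope.

(** By Hahn-Banach, [x ⊥_B y_i] yields [f_i ∈ J(x)] with [f_i y_i = 0].
    Their midpoint [h] still satisfies [h <= ‖·‖] and [h x = ‖x‖], and
    [|h (y1 + y2)| = |f2 y1 + f1 y2| / 2 <= ε (‖y1‖ + ‖y2‖) / 2] because
    [|f2 y1| = |(f1 - f2) y1| <= ‖f1 - f2‖ ‖y1‖ <= ε ‖y1‖].  Then
    [‖x + λ(y1 + y2)‖ >= h (x + λ(y1 + y2)) >= ‖x‖ - δ ‖λ(y1 + y2)‖] with
    [δ = ε (‖y1‖ + ‖y2‖) / (2 ‖y1 + y2‖) < 1], and squaring gives
    [x ⊥_B^δ (y1 + y2)]. *)

Section NormedSpace.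
Local Set Implicit Arguments.
Local Unset Strict Implicit.
Context {R : realType} {X : normedModType R}.

Section LinearFunctional.
Variable f : X -> R.
Hypothesis lf : is_linear_functional f.

Lemma linear_functionalD u v : f (u + v) = f u + f v.
Proof. by rewrite -[u in LHS]scale1r lf mul1r. Qed.

Lemma linear_functional0 : f 0 = 0.
Proof. by have := lf (-1) 0 0; rewrite scaleN1r oppr0 addr0 mulN1r addNr. Qed.

Lemma linear_functionalZ a u : f (a *: u) = a * f u.
Proof. by rewrite -[a *: u]addr0 lf linear_functional0 addr0. Qed.

Lemma linear_functional_norm_le : (forall z, f z <= `|z|) -> forall z, `|f z| <= `|z|.
Proof.
move=> fle z; rewrite ler_norml fle andbT.
by have := fle (- z); rewrite normrN -scaleN1r linear_functionalZ mulN1r lerNl.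
Qed.

End LinearFunctional.

Lemma dual_normP (g : X -> R) : in_dual g -> forall z, `|g z| <= dual_norm g * `|z|.
Proof.
move=> [lg [C gC]] z.
have [->|zn0] := eqVneq z 0; first by rewrite linear_functional0 // !normr0 mulr0.
have nz : 0 < `|z| by rewrite normr_gt0.
pose w := `|z|^-1 *: z.
have nw : `|w| = 1 by rewrite normrZ normrV ?unitfE ?gt_eqF // normr_id mulVf ?gt_eqF.
have gw : `|g w| <= dual_norm g.
  apply: ub_le_sup; last by exists w => //; rewrite /mkset nw.
  exists `|C| => _ [v /= vn <-].
  apply: (le_trans (gC v)); apply: (le_trans (ler_norm _)).
  by rewrite normrM ler_piMr // normr_id.
have -> : `|g z| = `|z| * `|g w|.
  rewrite linear_functionalZ // normrM normrV ?unitfE ?gt_eqF //.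
  by rewrite normr_id mulVKf ?gt_eqF.
by rewrite mulrC ler_wpM2r.
Qed.

Lemma norming_in_Jset (f : X -> R) (x : X) : x != 0 -> is_linear_functional f ->
  (forall z, `|f z| <= `|z|) -> f x = `|x| -> f \in Jset x.
Proof.
move=> xn0 lf fle fx; rewrite inE; split => //; split.
  by split => //; exists 1 => z; rewrite mul1r.
have fbd : has_ubound [set `|f z| | z in [set z : X | `|z| <= 1]].
  by exists 1 => _ [v /= vn <-]; exact: le_trans (fle v) vn.
have nx : 0 < `|x| by rewrite normr_gt0.
pose w := `|x|^-1 *: x.
apply/eqP; rewrite eq_le; apply/andP; split.
  apply: ge_sup; first by exists `|f 0|, 0 => //=; rewrite normr0.
  by move=> _ [v /= vn <-]; exact: le_trans (fle v) vn.
have <- : `|f w| = 1 by rewrite linear_functionalZ // fx mulVf ?gt_eqF // normr1.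
apply: ub_le_sup => //; exists w => //.
by rewrite /mkset normrZ normrV ?unitfE ?gt_eqF // normr_id mulVf ?gt_eqF.
Qed.

Lemma JsetP (f : X -> R) (x : X) : f \in Jset x ->
  [/\ is_linear_functional f, forall z, `|f z| <= `|z| & f x = `|x|].
Proof.
rewrite inE => -[[df nf1] fx]; split => // [|z]; first by case: df.
by have := dual_normP df z; rewrite nf1 mul1r.
Qed.

Lemma Jset_midpoint (f g : X -> R) (x : X) : f \in Jset x -> g \in Jset x ->
  let h z := (f z + g z) / 2 in
  [/\ is_linear_functional h, forall z, h z <= `|z| & h x = `|x|].
Proof.
move=> /JsetP[lf fle fx] /JsetP[lg gle gx] h; split=> [a u v|z|].
- by rewrite /h lf lg; ring.
- have := fle z; have := gle z; rewrite /h !ler_norml.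
  by move=> /andP[_ ?] /andP[_ ?]; lra.
- by rewrite /h fx gx; field.
Qed.

Lemma eps_smooth_orth_bound (eps : R) (x y : X) (f g : X -> R) :
  eps_smooth eps x -> f \in Jset x -> g \in Jset x -> f y = 0 ->
  `|g y| <= eps * `|y|.
Proof.
move=> sm Jf Jg fy.
have [lf fle _] := JsetP Jf; have [lg gle _] := JsetP Jg.
have dfg : in_dual (fun z => f z - g z).
  split; first by move=> a u v; rewrite lf lg; lra.
  exists 2 => z; apply: (le_trans (ler_normB _ _)).
  by have := fle z; have := gle z; lra.
have := dual_normP dfg y; rewrite fy sub0r normrN => /le_trans; apply.
by rewrite ler_wpM2r // sm.
Qed.

Section HahnBanach.

Definition linear_graph (G : set (X * R)) :=
  forall a u r v s, G (u, r) -> G (v, s) -> G (a *: u + v, a * r + s).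

Definition norm_dominated_graph (G : set (X * R)) :=
  [/\ linear_graph G, forall u r, G (u, r) -> r <= `|u| & G (0, 0)].

Lemma dominated_graph_functional G u r s :
  norm_dominated_graph G -> G (u, r) -> G (u, s) -> r = s.
Proof.
move=> [lin dom _] Gr Gs.
have := dom _ _ (lin (-1) u r u s Gr Gs); have := dom _ _ (lin (-1) u s u r Gs Gr).
by rewrite scaleN1r addNr normr0; lra.
Qed.

Lemma dominated_graph_scale G k u r :
  norm_dominated_graph G -> G (u, r) -> G (k *: u, k * r).
Proof. by move=> [lin _ G00] Gu; have := lin k u r 0 0 Gu G00; rewrite !addr0. Qed.

(* The one-dimensional step: [c] is squeezed between
   [sup {r - ‖u - z‖}] and [inf {‖v + z‖ - s}], which are ordered since
   [r + s <= ‖u + v‖ <= ‖u - z‖ + ‖v + z‖]. *)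
Lemma dominated_graph_extension_value G z : norm_dominated_graph G ->
  exists c, forall u r t, G (u, r) -> r + t * c <= `|u + t *: z|.
Proof.
move=> gG; have [lin dom G00] := gG.
have sep u r v s : G (u, r) -> G (v, s) -> r - `|u - z| <= `|v + z| - s.
  move=> Gu Gv; have := dom _ _ (lin 1 u r v s Gu Gv); rewrite scale1r mul1r.
  have : `|u + v| <= `|u - z| + `|v + z|.
    have -> : u + v = (u - z) + (v + z) by rewrite addrACA addNr addr0.
    exact: ler_normD.
  lra.
pose A := [set t | exists u r, G (u, r) /\ t = r - `|u - z|].
have A0 : A !=set0 by exists (0 - `|0 - z|), 0, 0.
exists (sup A); move=> u r t Gu.
have sup_le v s : G (v, s) -> s + sup A <= `|v + z|.
  move=> Gv; suff : sup A <= `|v + z| - s by lra.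
  by apply: ge_sup => // _ [u' [r' [Gu' ->]]]; exact: sep.
have le_sup u' r' : G (u', r') -> r' - sup A <= `|u' - z|.
  move=> Gu'; suff : r' - `|u' - z| <= sup A by lra.
  apply: ub_le_sup; last by exists u', r'.
  by exists (`|0 + z| - 0) => _ [v [s [Gv ->]]]; exact: sep.
have [tlt|tgt|->] := ltgtP t 0; last by rewrite mul0r scale0r !addr0 dom.
- have tn : 0 < - t by rewrite oppr_gt0.
  have := le_sup _ _ (dominated_graph_scale (- t)^-1 gG Gu).
  have -> : (- t)^-1 *: u - z = (- t)^-1 *: (u + t *: z).
    by rewrite scalerDr scalerA invrN mulNr mulVf ?lt_eqF // scaleN1r.
  rewrite normrZ gtr0_norm ?invr_gt0 // -(ler_pM2l tn) mulrBr !mulrA mulfV ?gt_eqF //.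
  by rewrite !mul1r; lra.
- have := sup_le _ _ (dominated_graph_scale t^-1 gG Gu).
  have -> : t^-1 *: u + z = t^-1 *: (u + t *: z).
    by rewrite scalerDr scalerA mulVf ?gt_eqF // scale1r.
  rewrite normrZ gtr0_norm ?invr_gt0 // -(ler_pM2l tgt) mulrDr !mulrA mulfV ?gt_eqF //.
  by rewrite !mul1r mulrC.
Qed.

Lemma dominated_graph_extend G z : norm_dominated_graph G ->
  exists2 G', norm_dominated_graph G' /\ G `<=` G' & exists c, G' (z, c).
Proof.
move=> gG; have [lin _ G00] := gG.
have [c domc] := dominated_graph_extension_value z gG.
pose G' := [set p | exists u r t, G (u, r) /\ p = (u + t *: z, r + t * c)].
exists G'; last by exists c, 0, 0, 1; rewrite scale1r add0r mul1r add0r.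
split; last by move=> [u r] Gu; exists u, r, 0; rewrite scale0r mul0r !addr0.
split.
- move=> a _ _ _ _ [u [r [t [Gu [-> ->]]]]] [v [s [t' [Gv [-> ->]]]]].
  exists (a *: u + v), (a * r + s), (a * t + t'); split; first exact: lin.
  by rewrite scalerDr scalerA addrACA -scalerDl mulrDr mulrA addrACA -mulrDl.
- by move=> _ _ [u [r [t [Gu [-> ->]]]]]; exact: domc.
- by exists 0, 0, 0; rewrite scale0r mul0r !addr0.
Qed.

Lemma dominated_graph_chain_union G0 (F : set (set (X * R))) :
  norm_dominated_graph G0 -> (forall Y, F Y -> norm_dominated_graph (Y `|` G0)) ->
  total_on F subset -> norm_dominated_graph (\bigcup_(Y in F) Y `|` G0).
Proof.
move=> gG0 FP Ftot; set U := \bigcup_(Y in F) Y `|` G0.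
have common p q : U p -> U q ->
    exists H, [/\ norm_dominated_graph H, H p, H q & H `<=` U].
  have sub Y : F Y -> Y `|` G0 `<=` U.
    by move=> FY w [Yw|G0w]; [left; exists Y | right].
  move=> [[Y1 FY1 Y1p]|G0p] [[Y2 FY2 Y2q]|G0q].
  - have [s12|s21] := Ftot _ _ FY1 FY2.
    + by exists (Y2 `|` G0); split; [exact: FP|left; exact: s12|left|exact: sub].
    + by exists (Y1 `|` G0); split; [exact: FP|left|left; exact: s21|exact: sub].
  - by exists (Y1 `|` G0); split; [exact: FP|left|right|exact: sub].
  - by exists (Y2 `|` G0); split; [exact: FP|right|left|exact: sub].
  - by exists G0; split => // w G0w; right.
split.
- move=> a u r v s Up Uq; have [H [[lin _ _] Hp Hq HU]] := common _ _ Up Uq.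
  exact/HU/lin.
- by move=> u r Up; have [H [[_ dom _] Hp _ _]] := common _ _ Up Up; exact: dom.
- by right; case: gG0.
Qed.

Lemma dominated_graph_total G0 : norm_dominated_graph G0 ->
  exists2 M, norm_dominated_graph M /\ G0 `<=` M & forall z, exists r, M (z, r).
Proof.
move=> gG0.
have [|A [gA Amax]] := Zorn_bigcup (P := fun Y => norm_dominated_graph (Y `|` G0)).
  by move=> F FP; exact: dominated_graph_chain_union.
exists (A `|` G0); first by split => // p; right.
move=> z; apply: contrapT => Mz.
have [G' [gG' AG'] [c G'z]] := dominated_graph_extend z gA.
apply: (Amax G'); last by rewrite setUidl // => p G0p; apply: AG'; right.
split; first by move=> p Ap; apply: AG'; left.
by move=> G'A; apply: Mz; exists c; left; exact: G'A.
Qed.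

Theorem hahn_banach_norm G0 : norm_dominated_graph G0 ->
  exists f : X -> R, [/\ is_linear_functional f, forall z, f z <= `|z|
                       & forall u r, G0 (u, r) -> f u = r].
Proof.
move=> gG0; have [M [gM G0M] Mtot] := dominated_graph_total gG0.
have [f Mf] := choice Mtot.
have fE z r : M (z, r) -> f z = r by exact: dominated_graph_functional gM (Mf z).
have [lin dom _] := gM.
exists f; split=> [a u v|z|u r /G0M]; [exact/fE/lin | exact: dom | exact: fE].
Qed.

End HahnBanach.

Lemma BJ_orth_support_functional (x y : X) : x != 0 -> BJ_orth x y ->
  exists2 f, f \in Jset x & f y = 0.
Proof.
move=> xn0 xy.
pose G0 := [set p : X * R | exists a b, p = (a *: x + b *: y, a * `|x|)].
have gG0 : norm_dominated_graph G0.
  split.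
  - move=> c _ _ _ _ [a [b [-> ->]]] [a' [b' [-> ->]]].
    exists (c * a + a'), (c * b + b'); congr pair; last by rewrite mulrA mulrDl.
    by rewrite scalerDr !scalerA addrACA -!scalerDl.
  - move=> _ _ [a [b [-> ->]]].
    have [->|an0] := eqVneq a 0; first by rewrite mul0r.
    have -> : a *: x + b *: y = a *: (x + (b / a) *: y).
      by rewrite scalerDr scalerA mulrCA mulfV // mulr1.
    rewrite normrZ; apply: (le_trans (ler_wpM2r (normr_ge0 x) (ler_norm a))).
    exact/ler_wpM2l/xy.
  - by exists 0, 0; rewrite !scale0r addr0 mul0r.
have [f [lf fle fG0]] := hahn_banach_norm gG0.
exists f; last by apply: fG0; exists 0, 1; rewrite scale0r scale1r add0r mul0r.
apply: norming_in_Jset => //; first exact: linear_functional_norm_le.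
by apply: fG0; exists 1, 0; rewrite scale1r scale0r addr0 mul1r.
Qed.

(* The squaring step: [‖x‖ - t <= N] with [t >= 0] gives
   [‖x‖^2 - 2 ‖x‖ t <= N^2], trivially when [‖x‖ < 2 t] and from [(‖x‖ - t)^2 <= N^2] otherwise. *)
Lemma BJ_orth_approx_of_functional (h : X -> R) (delta : R) (x y : X) :
  is_linear_functional h -> (forall z, h z <= `|z|) -> h x = `|x| ->
  `|h y| <= delta * `|y| -> BJ_orth_approx delta x y.
Proof.
move=> lh hle hx hy l.
have t0 : 0 <= delta * `|l *: y|.
  by rewrite normrZ mulrCA mulr_ge0 // (le_trans _ hy).
have lower : `|x| - delta * `|l *: y| <= `|x + l *: y|.
  apply: le_trans (hle (x + l *: y)).
  rewrite (linear_functionalD lh) (linear_functionalZ lh) hx lerD2l.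
  rewrite normrZ lerNl -mulrN; apply: le_trans (ler_norm _) _.
  by rewrite normrM normrN mulrCA; apply: ler_wpM2l.
have -> : 2 * delta * `|x| * `|l *: y| = 2 * `|x| * (delta * `|l *: y|) by ring.
move: t0 lower (normr_ge0 x) (normr_ge0 (x + l *: y)).
move: (delta * _) `|x| `|x + l *: y| => t n N t0 nN n0 N0.
by have [|] := lerP t n; nra.
Qed.

End NormedSpace.

Theorem theorem4p3 (R : realType) (X : normedModType R) (x y1 y2 : X) (eps : R) :
  x != 0 -> y1 != 0 -> y2 != 0 ->
  BJ_orth x y1 -> BJ_orth x y2 ->
  eps_smooth eps x ->
  0 <= eps -> eps < 2 * `|y1 + y2| / (`|y1| + `|y2|) ->
  exists eps1 : R, 0 <= eps1 < 1 /\ BJ_orth_approx eps1 x (y1 + y2).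
Proof.
move=> xn0 y1n0 y2n0 xy1 xy2 sm eps0 epslt.
have [f1 J1 f1y1] := BJ_orth_support_functional xn0 xy1.
have [f2 J2 f2y2] := BJ_orth_support_functional xn0 xy2.
have f2y1 := eps_smooth_orth_bound sm J1 J2 f1y1.
have f1y2 := eps_smooth_orth_bound sm J2 J1 f2y2.
have ny12 : 0 < `|y1| + `|y2| by rewrite addr_gt0 ?normr_gt0.
have ny : 0 < `|y1 + y2|.
  by have := le_lt_trans eps0 epslt; rewrite pmulr_lgt0 ?invr_gt0 // pmulr_rgt0.
exists (eps * (`|y1| + `|y2|) / (2 * `|y1 + y2|)); split.
  rewrite divr_ge0 ?mulr_ge0 ?addr_ge0 //=.
  by rewrite ltr_pdivrMr ?mulr_gt0 // mul1r -ltr_pdivlMr.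
have [lh hle hx] := Jset_midpoint J1 J2.
apply: (BJ_orth_approx_of_functional lh hle hx).
have [[lf1 _ _] [lf2 _ _]] := (JsetP J1, JsetP J2).
rewrite (linear_functionalD lf1) (linear_functionalD lf2) f1y1 f2y2 add0r addr0.
have -> : eps * (`|y1| + `|y2|) / (2 * `|y1 + y2|) * `|y1 + y2|
          = eps * (`|y1| + `|y2|) / 2.
  by field; rewrite gt_eqF.
rewrite normrM (@gtr0_norm _ 2^-1) ?invr_gt0 // ler_pM2r ?invr_gt0 //.
by rewrite addrC mulrDr; apply: (le_trans (ler_normD _ _)); apply: lerD.
Qed.
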